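(* Let $(X_n)$ be i.i.d. real random variables distributed as $X$, with $\mathbb{P}(X<0)>0$ and $X$ non-lattice, and let $(Y_n)$ be i.i.d., independent of $(X_n)$, with $\mathbb{P}(Y_1=1)=p=1-\mathbb{P}(Y_1=-1)$, $p\in(0,1)$. Let $W$ have the stationary distribution of $W_{n+1}=(Y_nW_n+X_n)^+$. Suppose there exists $\kappa>0$ with $\mathbb{E}[e^{\kappa X}]=1/p$ and $m=\mathbb{E}[Xe^{\kappa X}]<\infty$. Let $R=e^W$, $M=Be^X$ with $B$ Bernoulli($p$) independent of $X$, and $(B,X)$ independent of $R$, and let \[C=\frac1m\int_0^\infty\big[\mathbb{P}(R>t)-\mathbb{P}(MR>t)\big]t^{\kappa-1}\,dt.\] Then, with $X$ and $W$ independent, \[C=\frac{1-p}{m\kappa}+\frac{1-p}{m}\int_0^\infty\mathbb{P}(X-W>s)e^{\kappa s}\,ds+\frac pm\int_{-\infty}^0e^{\kappa s}\,\mathbb{P}(X+W\le s)\,ds.\]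
   Context: $W$ denotes a random variable with $W\stackrel{D}{=}(YW+X)^+$, where $W,Y,X$ are independent and $Y\stackrel{D}{=}Y_1$. *)

From HB Require Import structures.
From mathcomp Require Import all_boot all_order all_algebra.
From mathcomp Require Import all_classical all_reals all_analysis.
Set Implicit Arguments.
Unset Strict Implicit.
Unset Printing Implicit Defensive.
Import Order.TTheory GRing.Theory Num.Theory.
Local Open Scope classical_set_scope.
Local Open Scope ring_scope.

(* Mutual independence of three real random variables: product rule for
   all triples of Borel sets (taking some of them = setT gives the
   sub-family product rules). *)
Definition indep3 (d : measure_display) (T : measurableType d) (R : realType)
  (P : probability T R) (X1 X2 X3 : T -> R) : Prop :=
  forall A1 A2 A3 : set R, measurable A1 -> measurable A2 -> measurable A3 ->
    P (X1 @^-1` A1 `&` X2 @^-1` A2 `&` X3 @^-1` A3) =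
    (P (X1 @^-1` A1) * P (X2 @^-1` A2) * P (X3 @^-1` A3))%E.

Definition lattice_rv (d : measure_display) (T : measurableType d) (R : realType)
  (P : probability T R) (X : T -> R) : Prop :=
  exists (a b : R), 0 < a /\
    P [set w | exists k : int, X w = b + k%:~R * a] = 1%E.

From HB Require Import structures.
From mathcomp Require Import all_boot all_order all_algebra.
From mathcomp Require Import all_classical all_reals all_analysis.
From mathcomp Require Import measurable_realfun lra ring.
Set Implicit Arguments.
Unset Strict Implicit.
Unset Printing Implicit Defensive.
Import Order.TTheory GRing.Theory Num.Theory.
Import numFieldNormedType.Exports.
Local Open Scope classical_set_scope.
Local Open Scope ring_scope.
Section expR_rays.
Context (R : realType).
Local Notation mu := (@lebesgue_measure R).

Let continuous_expRM (k : R) : continuous (fun x : R => expR (k * x)).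
Proof.
move=> z; apply: continuous_comp; last exact: continuous_expR.
by apply: continuousM => //; exact: cst_continuous.
Qed.

Let continuous_scaled_expRM (c k : R) : continuous (fun x : R => c * expR (k * x)).
Proof.
move=> z; apply: (@continuous_comp _ _ _ (fun x => expR (k * x)) ( *%R c)).
  exact: continuous_expRM.
by apply: continuousM => //; exact: cst_continuous.
Qed.

Lemma integral_expRM_itvcy (k a : R) : 0 < k ->
  (\int[mu]_(x in `[a, +oo[) (k * expR (- k * x))%:E = (expR (- k * a))%:E)%E.
Proof.
move=> k0.
have dF x : (fun y => - expR (- k * y))^`()%classic x = k * expR (- k * x).
  rewrite derive1N; last exact: ex_derive.
  rewrite (_ : (fun y => expR (- k * y)) = expR \o *%R (- k)) //.
  rewrite derive1_comp // derive1E.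
  have /funeqP -> := @derive_expR R.
  by rewrite derive1Ml // derive1_id mulr1 mulrC mulNr opprK.
rewrite (@ge0_continuous_FTC2y _ _ (fun y => - expR (- k * y)) a 0) //.
- by rewrite EFinN oppeK add0e.
- by move=> x _; rewrite mulr_ge0 ?expR_ge0 // ltW.
- exact/continuous_subspaceT/continuous_scaled_expRM.
- rewrite -oppr0; apply: cvgN.
  rewrite (_ : (fun x => expR (- k * x)) = (fun z => expR (- z)) \o *%R k); last first.
    by apply: eq_fun => x; rewrite mulNr.
  apply: (@cvg_comp _ _ _ _ _ _ (pinfty_nbhs R)); last exact: cvgr_expR.
  exact: gt0_cvgMry.
- by apply: cvgN; apply/cvg_at_right_filter; exact: continuous_expRM.
Qed.

Lemma integral_expRM_itvNyc (k c : R) : 0 < k ->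
  (\int[mu]_(x in `]-oo, c]) (k * expR (k * x))%:E = (expR (k * c))%:E)%E.
Proof.
move=> k0; rewrite -[c]opprK ge0_integration_by_substitutionNy.
- rewrite mulrN -mulNr -integral_expRM_itvcy //.
  by apply: eq_integral => x _ /=; rewrite mulrN mulNr.
- exact/continuous_subspaceT/continuous_scaled_expRM.
- by move=> x _; rewrite mulr_ge0 ?expR_ge0 // ltW.
Qed.

End expR_rays.
Section density_measure.
Context d (T : measurableType d) (R : realType).
Variables (mu : {measure set T -> \bar R}) (g : T -> R).
Hypotheses (mg : measurable_fun setT g) (g0 : forall x, 0 <= g x).
Local Open Scope ereal_scope.

Definition density (A : set T) := \int[mu]_(x in A) (g x)%:E.

Let density0 : density set0 = 0.
Proof. exact: integral_set0. Qed.

Let density_ge0 A : 0 <= density A.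
Proof. by apply: integral_ge0 => x _; rewrite lee_fin. Qed.

Let density_sigma_additive : semi_sigma_additive density.
Proof.
apply: semi_sigma_additive_nng_induced; first exact/measurable_EFinP.
by move=> x; rewrite lee_fin.
Qed.

HB.instance Definition _ := isMeasure.Build _ _ _ density
  density0 density_ge0 density_sigma_additive.

Definition density_measure : {measure set T -> \bar R} := density.

Import HBNNSimple.

Let integral_density_measure_nnsfun (h : {nnsfun T >-> R}) :
  \int[density_measure]_x (h x)%:E = \int[mu]_x ((h x)%:E * (g x)%:E).
Proof.
have mhr r : measurable_fun setT (fun x => (r * \1_(h @^-1` [set r]) x)%:E).
  by apply/measurable_EFinP; apply: measurable_funM.
under [RHS]eq_integral => x _.
  rewrite fimfunE -fsumEFin // ge0_mule_fsuml; last by move=> r; rewrite EFinM nnfun_muleindic_ge0.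
  over.
rewrite integralT_nnsfun sintegralE /= ge0_integral_fsum //; first last.
- by move=> r x _; rewrite mule_ge0 ?nnfun_muleindic_ge0 ?lee_fin.
- by move=> r; apply: emeasurable_funM => //; exact/measurable_EFinP.
apply: eq_fsbigr => r /[!inE] -[x _ <-].
under eq_integral do rewrite EFinM -muleA.
rewrite ge0_integralZl ?lee_fin //; first last.
- by move=> y _; rewrite mule_ge0 ?lee_fin.
- by apply: emeasurable_funM => //; exact/measurable_EFinP.
congr (_ * _); rewrite /= /density -[in LHS](setTI (h @^-1` _)).
rewrite integral_mkcondr.
by apply: eq_integral => y _; rewrite epatch_indic muleC.
Qed.

Lemma integral_density_measure (f : T -> \bar R) :
  measurable_fun setT f -> (forall x, 0 <= f x) ->
  \int[density_measure]_x f x = \int[mu]_x (f x * (g x)%:E).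
Proof.
move=> mf f0; pose h := nnsfun_approx measurableT mf.
have hf x : EFin \o h ^~ x @ \oo --> f x by exact: cvg_nnsfun_approx.
have mh n : measurable_fun setT (EFin \o h n) by exact/measurable_EFinP.
have nd_h x m n : (m <= n)%N -> (h m x <= h n x)%R.
  by move=> mn; exact/lefP/nd_nnsfun_approx.
transitivity (limn (fun n => \int[density_measure]_x (h n x)%:E)).
  rewrite -monotone_convergence //; last 2 first.
  - by move=> n x _; rewrite lee_fin.
  - by move=> x _ m n mn; rewrite lee_fin nd_h.
  by apply: eq_integral => x _; apply/esym/cvg_lim => //; exact: hf.
under eq_fun do rewrite integral_density_measure_nnsfun.
rewrite -monotone_convergence //; first last.
- by move=> x _ m n mn; rewrite lee_wpmul2r ?lee_fin ?nd_h.
- by move=> n x _; rewrite mule_ge0 ?lee_fin.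
- by move=> n; apply: emeasurable_funM => //; exact/measurable_EFinP.
by apply: eq_integral => x _; apply/cvg_lim => //; apply: cvgeZr => //; exact: hf.
Qed.

End density_measure.
Lemma measure_itvoc_rays (R : realType) (m : {measure set (measurableTypeR R) -> \bar R})
    (a b : R) : a <= b -> (m `]-oo, b]%classic < +oo)%E ->
  m `]a, b]%classic = (m `]-oo, b]%classic - m `]-oo, a]%classic)%E.
Proof.
move=> ab mb; have -> : `]a, b]%classic = `]-oo, b] `\` `]-oo, a] :> set R.
  apply/seteqP; split => x /=; rewrite !in_itv /=.
    by move=> /andP[ax ->]; rewrite leNgt ax.
  by move=> [-> /negP]; rewrite -ltNge => ->.
rewrite measureD //; congr (_ - m _)%E; apply/seteqP; split => x /=; rewrite !in_itv /=.
  by case.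
by move=> xa; split => //; exact: le_trans xa ab.
Qed.
Section expR_substitution.
Context (R : realType).
Local Notation mu := (@lebesgue_measure R).

Let nu := @density_measure _ _ R mu expR (@measurable_expR R) (@expR_ge0 R).
Let mexpR : measurable_fun setT (expR : measurableTypeR R -> measurableTypeR R) :=
  @measurable_expR R.
Let nu_exp : {measure set (measurableTypeR R) -> \bar R} :=
  measure_function_pushforward__canonical__measure_function_Measure nu mexpR.
Let mu_pos : {measure set (measurableTypeR R) -> \bar R} :=
  mrestr mu (measurable_itv `]0%R, +oo[).

Let nu_exp_ray (x : R) : nu_exp `]-oo, x]%classic = (Num.max x 0)%:E.
Proof.
rewrite /nu_exp /= /pushforward /= /density.
have [x0|x0] := leP x 0.
  rewrite (_ : expR @^-1` _ = set0) ?integral_set0 //.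
  apply/seteqP; split => y //=; rewrite in_itv /= => yx.
  by have := lt_le_trans (expR_gt0 y) (le_trans yx x0); rewrite ltxx.
rewrite (_ : expR @^-1` _ = `]-oo, ln x]%classic); last first.
  by apply/seteqP; split => y /=; rewrite !in_itv /= -[y <= ln x]ler_expR lnK ?posrE.
rewrite -{2}(lnK (x0 : 0 < x)) -[in RHS](mul1r (ln x)) -integral_expRM_itvNyc //.
by apply: eq_integral => y _; rewrite !mul1r.
Qed.

Let mu_pos_ray (x : R) : mu_pos `]-oo, x]%classic = (Num.max x 0)%:E.
Proof.
rewrite /mu_pos /= /mrestr (_ : _ `&` _ = `]0, x]%classic); last first.
  by apply/seteqP; split => y /=; rewrite !in_itv /= ?andbT;
    [case=> -> ->|case/andP=> -> ->].
rewrite lebesgue_measure_itv /= lte_fin oppr0 adde0.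
by case: ltP.
Qed.

Lemma expR_density_preimage (A : set R) : measurable A ->
  nu (expR @^-1` A) = mu (A `&` `]0%R, +oo[).
Proof.
have nu_exp_ray_fin x : (nu_exp `]-oo, x]%classic < +oo)%E by rewrite nu_exp_ray ltry.
have mu_pos_ray_fin x : (mu_pos `]-oo, x]%classic < +oo)%E by rewrite mu_pos_ray ltry.
have nu_exp_mu_pos X : ocitv X -> nu_exp X = mu_pos X.
  case/ocitvP => [->|[[a b] /= ab ->]]; first by rewrite !measure0.
  rewrite !measure_itvoc_rays ?ltW ?nu_exp_ray_fin ?mu_pos_ray_fin //.
  by rewrite !nu_exp_ray !mu_pos_ray.
have nu_exp_fin (k : nat) : (nu_exp `](- k%:R)%R, k%:R%R]%classic < +oo)%E.
  apply: le_lt_trans (nu_exp_ray_fin k%:R).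
  by apply: le_measure; rewrite ?inE // => x /=; rewrite !in_itv /= => /andP[].
move=> mA; apply: (@measure_unique _ _ (measurableTypeR R) (@ocitv R)
  (fun k => `](- k%:R), k%:R]%classic) erefl (@ocitvI R) _ _ nu_exp mu_pos
  nu_exp_mu_pos nu_exp_fin A mA) => [k|]; first exact: is_ocitv.
apply/seteqP; split => // x _ /=.
exists (Num.bound `|x|) => //=; rewrite in_itv /=.
have := archi_boundP (normr_ge0 x); have := ler_norm x; have := ler_norm (- x).
by rewrite normrN; set b := _%:R => xb Nxb bx; apply/andP; split; lra.
Qed.

Lemma ge0_integral_itv0y_expR (f : R -> \bar R) :
  measurable_fun setT f -> (forall t, 0 <= f t)%E ->
  (\int[mu]_(t in `]0%R, +oo[) f t = \int[mu]_s (f (expR s) * (expR s)%:E))%E.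
Proof.
move=> mf f0.
have expR_pos : (@expR R) @^-1` `]0%R, +oo[%classic = setT.
  by apply/seteqP; split => x //= _; rewrite in_itv /= expR_gt0.
rewrite (eq_measure_integral nu_exp); last first.
  move=> A mA A0; rewrite /= /pushforward expR_density_preimage //.
  by rewrite setIidl.
rewrite ge0_integral_pushforward //; last exact: measurable_funTS.
rewrite expR_pos -integral_density_measure //.
exact: measurableT_comp.
Qed.

Lemma ge0_integral_itv0y_powR (k : R) (f : R -> \bar R) :
  measurable_fun setT f -> (forall s, 0 <= f s)%E ->
  (\int[mu]_(t in `]0%R, +oo[) (f (ln t) * (t `^ (k - 1))%:E) =
   \int[mu]_s (f s * (expR (k * s))%:E))%E.
Proof.
move=> mf f0; rewrite ge0_integral_itv0y_expR; first last.
- by move=> t; rewrite mule_ge0 // lee_fin powR_ge0.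
- apply: emeasurable_funM; first exact: measurableT_comp mf (@measurable_ln R).
  by apply/measurable_EFinP; exact: measurable_powR.
apply: eq_integral => s _; rewrite expRK -muleA -EFinM.
by rewrite -expRM -expRD mulrBr mulr1 subrK mulrC.
Qed.

End expR_substitution.
Section measurable_level_sets.
Context d (U : measurableType d) (R : realType) (f : U -> R).
Hypothesis mf : measurable_fun setT f.

Lemma measurable_set_gt (s : R) : measurable [set u | s < f u].
Proof. by rewrite -preimage_itvoy -[_ @^-1` _]setTI; exact: mf. Qed.

Lemma measurable_set_le (s : R) : measurable [set u | f u <= s].
Proof. by rewrite -preimage_itvNyc -[_ @^-1` _]setTI; exact: mf. Qed.

Lemma measurable_set_eq (s : R) : measurable [set u | f u = s].
Proof. by have := mf measurableT (measurable_set1 s); rewrite setTI. Qed.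

End measurable_level_sets.

Section probability_facts.
Context d (T : measurableType d) (R : realType) (P : probability T R).
Local Open Scope ereal_scope.

Lemma probability_fine (A : set T) : measurable A -> P A = (fine (P A))%:E.
Proof. by move=> mA; rewrite fineK // fin_num_measure. Qed.

Lemma probability_le_gt (f : T -> R) (s : R) : measurable_fun setT f ->
  P [set w | (f w <= s)%R] = 1 - P [set w | (s < f w)%R].
Proof.
move=> mf; rewrite -probability_setC; last exact: measurable_set_gt.
by congr (P _); apply/seteqP; split => w /=; rewrite leNgt => /negP.
Qed.

Lemma measurable_fine_probability_le (f : T -> R) : measurable_fun setT f ->
  measurable_fun setT (fun s : R => fine (P [set w | (f w <= s)%R])).
Proof.
move=> mf; apply: nondecreasing_measurable => // x y xy.
rewrite -lee_fin -!probability_fine; try exact: measurable_set_le.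
apply: le_measure; rewrite ?inE; try exact: measurable_set_le.
by move=> w /= /le_trans; apply.
Qed.

Lemma measurable_fine_probability_gt (f : T -> R) : measurable_fun setT f ->
  measurable_fun setT (fun s : R => fine (P [set w | (s < f w)%R])).
Proof.
move=> mf; apply: nonincreasing_measurable => // x y xy.
rewrite -lee_fin -!probability_fine; try exact: measurable_set_gt.
apply: le_measure; rewrite ?inE; try exact: measurable_set_gt.
by move=> w /=; exact: le_lt_trans.
Qed.

Lemma probability_two_values (Z : T -> R) (a b q : R) (S : set T) :
  measurable_fun setT Z -> measurable S -> a != b ->
  P [set w | Z w = a] = q%:E -> P [set w | Z w = b] = (1 - q)%:E ->
  P S = P (S `&` [set w | Z w = a]) + P (S `&` [set w | Z w = b]).
Proof.
move=> mZ mS ab Za Zb.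
have mZa := measurable_set_eq mZ a; have mZb := measurable_set_eq mZ b.
have disj : [set w | Z w = a] `&` [set w | Z w = b] = set0.
  by apply/seteqP; split => w //= [-> wb]; move: ab; rewrite wb eqxx.
have mE := measurableU _ _ mZa mZb.
have PE : P ([set w | Z w = a] `|` [set w | Z w = b]) = 1.
  rewrite (measureU P mZa mZb disj) [X in (X + _)%R]Za [X in (_ + X)%R]Zb.
  by rewrite -EFinD addrC subrK.
have PSE0 : P (S `\` ([set w | Z w = a] `|` [set w | Z w = b])) = 0.
  apply/le_anti; rewrite measure_ge0 andbT.
  have <- : P (~` ([set w | Z w = a] `|` [set w | Z w = b])) = 0.
    by rewrite probability_setC // PE subee.
  by apply: le_measure; rewrite ?inE; [exact: measurableD|exact: measurableC|move=> w []].
rewrite (measureDI P mS mE) [X in (X + _)%R]PSE0 add0r setIUr measureU //; try exact: measurableI.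
by rewrite setIACA disj setI0.
Qed.

End probability_facts.
Section independence.
Context d (T : measurableType d) (R : realType) (P : probability T R).
Local Open Scope ereal_scope.

Lemma indep3C12 (X Y W : T -> R) : indep3 P X Y W -> indep3 P Y X W.
Proof.
move=> XYW A1 A2 A3 mA1 mA2 mA3.
by rewrite (setIC (Y @^-1` A1)) XYW // (muleC (P (Y @^-1` A1))).
Qed.

Lemma indep3_pair (Z X W : T -> R) :
  measurable_fun setT Z -> measurable_fun setT X -> measurable_fun setT W ->
  indep3 P Z X W ->
  forall (A : set R) (D : set (R * R)), measurable A -> measurable D ->
  P (Z @^-1` A `&` (fun w => (X w, W w)) @^-1` D) =
  P (Z @^-1` A) * P ((fun w => (X w, W w)) @^-1` D).
Proof.
move=> mZ mX mW ZXW A D mA mD; set XW := fun w => (X w, W w).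
have mXW : measurable_fun setT XW by exact: measurable_fun_pair.
have mZA : measurable (Z @^-1` A) by rewrite -[_ @^-1` _]setTI; exact: mZ.
pose c := fine (P (Z @^-1` A)).
have c0 : (0 <= c)%R by apply: fine_ge0; exact: measure_ge0.
have cE : P (Z @^-1` A) = c%:E by rewrite fineK // fin_num_measure.
pose law_on_ZA :=
  measure_function_pushforward__canonical__measure_function_Measure (mrestr P mZA) mXW.
pose scaled_law := mscale (NngNum c0)
  (measure_function_pushforward__canonical__measure_function_Measure P mXW).
suff : law_on_ZA D = scaled_law D.
  by rewrite /= /mrestr /pushforward /mscale /= setIC cE => ->.
apply: (@measure_unique _ _ _ _ (fun=> setT) (measurable_prod_measurableType _ _)) => //.
- move=> _ _ [B1 mB1 [B2 mB2 <-]] [C1 mC1 [C2 mC2 <-]].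
  exists (B1 `&` C1); first exact: measurableI.
  by exists (B2 `&` C2); [exact: measurableI|rewrite setXI].
- by move=> _; exists setT => //; exists setT => //; rewrite setXTT.
- by rewrite bigcup_const.
- move=> _ [B1 mB1 [B2 mB2 <-]].
  have XWB : XW @^-1` (B1 `*` B2) = X @^-1` B1 `&` W @^-1` B2 by [].
  rewrite /= /mrestr /pushforward /mscale /= XWB setIC setIA ZXW // -muleA.
  have := ZXW setT B1 B2 measurableT mB1 mB2.
  by rewrite preimage_setT setTI probability_setT mul1e cE => <-.
- move=> _; rewrite /= /mrestr /pushforward.
  by apply: le_lt_trans (probability_le1 _ _) (ltry _); rewrite preimage_setT setTI.
Qed.

End independence.
Section stationary_tail.
Context d (T : measurableType d) (R : realType) (P : probability T R).
Variables (X Y W : T -> R) (p : R).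
Hypotheses (mX : measurable_fun setT X) (mY : measurable_fun setT Y)
  (mW : measurable_fun setT W).
Hypotheses (Y1 : P [set w | Y w = 1] = p%:E)
  (Ym1 : P [set w | Y w = -1] = (1 - p)%:E).
Hypothesis XYW : indep3 P X Y W.
Hypothesis W_stationary : forall A : set R, measurable A ->
  P (W @^-1` A) = P ((fun w => Num.max (Y w * W w + X w) 0) @^-1` A).

Let XW := fun w => (X w, W w).

Let measurable_sum_gt (s : R) : measurable [set z : R * R | s < z.1 + z.2].
Proof. by apply: measurable_set_gt; apply: measurable_funD. Qed.

Let measurable_diff_gt (s : R) : measurable [set z : R * R | s < z.1 - z.2].
Proof. by apply: measurable_set_gt; apply: measurable_funB. Qed.

Let stationary_gt (s : R) :
  P [set w | s < W w] = P [set w | s < Num.max (Y w * W w + X w) 0].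
Proof. by rewrite -preimage_itvoy W_stationary // preimage_itvoy. Qed.

Lemma stationary_tail_lt0 (s : R) : s < 0 -> P [set w | s < W w] = 1%E.
Proof.
move=> s0; rewrite stationary_gt -(probability_setT P); congr (P _).
by apply/seteqP; split => w //= _; rewrite lt_max s0 orbT.
Qed.

Lemma stationary_tail_ge0 (s : R) : 0 <= s ->
  P [set w | s < W w] =
  (p%:E * P [set w | (s < X w + W w)%R] +
   (1 - p)%:E * P [set w | (s < X w - W w)%R])%E.
Proof.
move=> s0; rewrite stationary_gt.
have -> : [set w | s < Num.max (Y w * W w + X w) 0] = [set w | s < Y w * W w + X w].
  by apply/seteqP; split => w /=; rewrite lt_max (ltNge s 0) s0 orbF.
have mYWX : measurable_fun setT (fun w => Y w * W w + X w).
  by apply: measurable_funD => //; exact: measurable_funM.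
have one_neqN1 : (1 : R) != -1 by apply/eqP => /eqP; lra.
rewrite (probability_two_values mY (measurable_set_gt mYWX s) one_neqN1 Y1 Ym1).
have -> : [set w | s < Y w * W w + X w] `&` [set w | Y w = 1] =
    Y @^-1` [set 1] `&` XW @^-1` [set z | s < z.1 + z.2].
  apply/seteqP; split => w /=; first by case=> + Yw; rewrite Yw mul1r addrC.
  by case=> Yw; rewrite Yw mul1r addrC.
have -> : [set w | s < Y w * W w + X w] `&` [set w | Y w = -1] =
    Y @^-1` [set -1] `&` XW @^-1` [set z | s < z.1 - z.2].
  apply/seteqP; split => w /=; first by case=> + Yw; rewrite Yw mulN1r addrC.
  by case=> Yw; rewrite Yw mulN1r addrC.
have YXW := indep3C12 XYW.
by rewrite !(indep3_pair mY mX mW YXW) ?measurable_set1 //= Y1 Ym1.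
Qed.

End stationary_tail.

Section bernoulli_factor_tail.
Context d (T : measurableType d) (R : realType) (P : probability T R).
Variables (X W B : T -> R) (p : R).
Hypotheses (mX : measurable_fun setT X) (mW : measurable_fun setT W)
  (mB : measurable_fun setT B).
Hypotheses (B1 : P [set w | B w = 1] = p%:E) (B0 : P [set w | B w = 0] = (1 - p)%:E).
Hypothesis BXW : indep3 P B X W.

Lemma bernoulli_factor_tail (t : R) : 0 < t ->
  P [set w | t < B w * expR (X w) * expR (W w)] =
  (p%:E * P [set w | (ln t < X w + W w)%R])%E.
Proof.
move=> t0.
have mM : measurable_fun setT (fun w => B w * expR (X w) * expR (W w)).
  by apply: measurable_funM; [apply: measurable_funM|]; rewrite //; exact: measurableT_comp.
rewrite (probability_two_values mB (measurable_set_gt mM t) (oner_neq0 R) B1 B0).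
have -> : [set w | t < B w * expR (X w) * expR (W w)] `&` [set w | B w = 0] = set0.
  apply/seteqP; split => w //= [+ Bw]; rewrite Bw !mul0r => t_lt0.
  by have := lt_trans t0 t_lt0; rewrite ltxx.
have -> : [set w | t < B w * expR (X w) * expR (W w)] `&` [set w | B w = 1] =
    B @^-1` [set 1] `&` (fun w => (X w, W w)) @^-1` [set z | ln t < z.1 + z.2].
  apply/seteqP; split => w /=.
    by case=> + Bw; rewrite Bw mul1r -expRD -[ln t < _]ltr_expR lnK ?posrE.
  by case=> Bw; rewrite Bw mul1r -expRD -[ln t < _]ltr_expR lnK ?posrE.
rewrite measure0 adde0 (indep3_pair mB mX mW BXW) ?measurable_set1 //= ?B1 //.
by apply: measurable_set_gt; apply: measurable_funD.
Qed.

End bernoulli_factor_tail.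
Lemma indic_itvNyo (R : realType) (c s : R) :
  \1_(`]-oo, c[%classic : set R) s = (s < c)%R%:R :> R.
Proof.
rewrite indicE.
have [sc|cs] := ltP s c; [rewrite mem_set|rewrite memNset] => //=; rewrite in_itv /=.
by apply/negP; rewrite -leNgt.
Qed.

Lemma indic_itvcy (R : realType) (c s : R) :
  \1_(`[c, +oo[%classic : set R) s = (c <= s)%R%:R :> R.
Proof.
rewrite indicE.
have [cs|sc] := leP c s; [rewrite mem_set|rewrite memNset] => //=; rewrite in_itv /= andbT //.
by move/(lt_le_trans sc); rewrite ltxx.
Qed.

Definition tail_gap (R : realType) (p : R) (F1 F2 : R -> R) (s : R) : R :=
  (1 - p + p * F1 s) * \1_(`]-oo, 0[) s + (1 - p) * F2 s * \1_(`[0, +oo[) s.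

Section tail_gap_integral.
Context (R : realType) (k p : R) (F1 F2 : R -> R).
Hypotheses (k0 : 0 < k) (p01 : 0 <= p <= 1).
Hypotheses (mF1 : measurable_fun setT F1) (mF2 : measurable_fun setT F2).
Hypotheses (F10 : forall s, 0 <= F1 s) (F20 : forall s, 0 <= F2 s).
Local Notation mu := (@lebesgue_measure R).

Let p0 : 0 <= p. Proof. by case/andP: p01. Qed.
Let q0 : 0 <= 1 - p. Proof. by case/andP: p01; rewrite subr_ge0. Qed.

Let measurable_expRM : measurable_fun setT (fun s : R => expR (k * s)).
Proof. by apply: measurableT_comp => //; exact: measurable_funM. Qed.

Lemma measurable_tail_gap : measurable_fun setT (tail_gap p F1 F2).
Proof.
apply: measurable_funD.
- apply: measurable_funM; last exact: measurable_indic.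
  by apply: measurable_funD => //; exact: measurable_funM.
- by apply: measurable_funM; [exact: measurable_funM|exact: measurable_indic].
Qed.

Lemma tail_gap_ge0 s : 0 <= tail_gap p F1 F2 s.
Proof.
rewrite /tail_gap; apply: addr_ge0; apply: mulr_ge0; rewrite ?indicE ?ler0n //.
- by rewrite addr_ge0 // mulr_ge0.
- by rewrite mulr_ge0.
Qed.

Local Open Scope ereal_scope.

Lemma integral_expRM_itvNy0 : \int[mu]_(s in `]-oo, 0%R[) (expR (k * s))%:E = (k^-1)%:E.
Proof.
rewrite integral_itv_bndo_bndc; last exact/measurable_funTS/measurable_EFinP.
transitivity (\int[mu]_(s in `]-oo, 0%R]) ((k^-1)%:E * (k * expR (k * s))%:E)).
  by apply: eq_integral => s _; rewrite -EFinM mulrA mulVf ?mul1r ?gt_eqF.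
rewrite ge0_integralZl ?integral_expRM_itvNyc ?mulr0 ?expR0 ?mule1 ?lee_fin ?invr_ge0 ?ltW //.
- by apply/measurable_funTS/measurable_EFinP; exact: measurable_funM.
- by move=> s _; rewrite lee_fin mulr_ge0 ?expR_ge0 ?ltW.
Qed.

Lemma integral_tail_gap_expR :
  \int[mu]_s ((tail_gap p F1 F2 s)%:E * (expR (k * s))%:E) =
  ((1 - p) / k)%:E
  + (1 - p)%:E * \int[mu]_(s in `[0%R, +oo[) ((F2 s)%:E * (expR (k * s))%:E)
  + p%:E * \int[mu]_(s in `]-oo, 0%R]) ((expR (k * s))%:E * (F1 s)%:E).
Proof.
have mFk (F : R -> R) : measurable_fun setT F ->
  measurable_fun setT (fun s => (F s)%:E * (expR (k * s))%:E).
  by move=> mF; apply: emeasurable_funM; exact/measurable_EFinP.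
have mexpF1 : measurable_fun setT (fun s => (expR (k * s))%:E * (F1 s)%:E).
  by apply: emeasurable_funM; exact/measurable_EFinP.
have ge0E a b : (0 <= a)%R -> (0 <= b)%R -> 0 <= a%:E * b%:E.
  by move=> a0 b0; rewrite mule_ge0.
have disj : [disjoint (`]-oo, 0%R[%classic : set R) & `[0%R, +oo[%classic].
  rewrite disj_set2E; apply/eqP; rewrite -subset0 => x [] /=.
  by rewrite !in_itv /= andbT => /lt_le_trans /[apply]; rewrite ltxx.
rewrite -(setUv `]-oo, 0%R[%classic) setCitvl ge0_integral_setU //; first last.
- by move=> s _; rewrite ge0E ?tail_gap_ge0 ?expR_ge0.
- apply: measurable_funTS; apply: mFk; exact: measurable_tail_gap.
rewrite [RHS]addeAC; congr (_ + _).
  transitivity (\int[mu]_(s in `]-oo, 0%R[)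
      ((1 - p)%:E * (expR (k * s))%:E + p%:E * ((expR (k * s))%:E * (F1 s)%:E))).
    apply: eq_integral => s; rewrite inE /= in_itv /= => s0.
    rewrite /tail_gap indic_itvNyo indic_itvcy s0 leNgt s0 /=.
    by rewrite -!EFinM -EFinD; congr EFin; ring.
  rewrite ge0_integralD //; first last.
  - by apply/measurable_funTS/emeasurable_funM => //; exact/measurable_EFinP.
  - by move=> s _; rewrite !mule_ge0 ?lee_fin ?expR_ge0.
  - by apply/measurable_funTS/emeasurable_funM => //; exact/measurable_EFinP.
  - by move=> s _; rewrite mule_ge0 ?lee_fin ?expR_ge0.
  rewrite !ge0_integralZl ?lee_fin //; first last.
  - by apply/measurable_funTS/measurable_EFinP.
  - by move=> s _; rewrite mule_ge0 ?lee_fin ?expR_ge0.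
  - exact: measurable_funTS.
  rewrite integral_expRM_itvNy0 -EFinM integral_itv_bndo_bndc //.
  exact: measurable_funTS.
transitivity (\int[mu]_(s in `[0%R, +oo[) ((1 - p)%:E * ((F2 s)%:E * (expR (k * s))%:E))).
  apply: eq_integral => s; rewrite inE /= in_itv /= andbT => s0.
  rewrite /tail_gap indic_itvNyo indic_itvcy s0 ltNge s0 /=.
  by rewrite -!EFinM; congr EFin; ring.
rewrite ge0_integralZl ?lee_fin //.
- by apply: measurable_funTS; apply: mFk.
- by move=> s _; rewrite mule_ge0 ?lee_fin ?expR_ge0.
Qed.

End tail_gap_integral.
Section tail_difference.
Context d (T : measurableType d) (R : realType) (P : probability T R).
Variables (X Y W B : T -> R) (p : R).
Hypotheses (mX : measurable_fun setT X) (mY : measurable_fun setT Y)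
  (mW : measurable_fun setT W) (mB : measurable_fun setT B).
Hypotheses (Y1 : P [set w | Y w = 1] = p%:E)
  (Ym1 : P [set w | Y w = -1] = (1 - p)%:E).
Hypothesis XYW : indep3 P X Y W.
Hypothesis W_stationary : forall A : set R, measurable A ->
  P (W @^-1` A) = P ((fun w => Num.max (Y w * W w + X w) 0) @^-1` A).
Hypotheses (B1 : P [set w | B w = 1] = p%:E) (B0 : P [set w | B w = 0] = (1 - p)%:E).
Hypothesis BXW : indep3 P B X W.

Lemma tail_difference (t : R) : 0 < t ->
  (P [set w | (t < expR (W w))%R] -
   P [set w | (t < B w * expR (X w) * expR (W w))%R])%E =
  (tail_gap p (fun s => fine (P [set w | X w + W w <= s]))
              (fun s => fine (P [set w | s < X w - W w])) (ln t))%:E.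
Proof.
move=> t0; set s := ln t.
have -> : [set w | t < expR (W w)] = [set w | s < W w].
  by apply/seteqP; split => w /=; rewrite -[s < _]ltr_expR lnK ?posrE.
have mXpW : measurable_fun setT (fun w => X w + W w) by exact: measurable_funD.
have mXmW : measurable_fun setT (fun w => X w - W w) by exact: measurable_funB.
rewrite (bernoulli_factor_tail mX mW mB B1 B0 BXW t0) /tail_gap.
rewrite indic_itvNyo indic_itvcy (probability_le_gt P s mXpW).
have [s0|s0] := ltP s 0.
  rewrite (stationary_tail_lt0 W_stationary s0).
  rewrite (probability_fine P (measurable_set_gt mXpW s)) /=.
  by rewrite -[X in (X + _)%E]/(1%:E) -EFinD; congr EFin; ring.
rewrite (stationary_tail_ge0 mX mY mW Y1 Ym1 XYW W_stationary s0).
rewrite (probability_fine P (measurable_set_gt mXmW s)).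
rewrite (probability_fine P (measurable_set_gt mXpW s)) /=.
by rewrite -!EFinM -!EFinD; congr EFin; ring.
Qed.

End tail_difference.
Theorem proposition4p2 (R : realType) (d : measure_display)
  (T : measurableType d) (P : probability T R)
  (X Y W B : {RV P >-> R}) (p kappa : R) :
  (* P(X < 0) > 0, X non-lattice *)
  (0 < P [set w | (X w < 0)%R])%E ->
  ~ lattice_rv P X ->
  (* Y = +1 w.p. p, -1 w.p. 1 - p, p in (0,1) *)
  0 < p < 1 ->
  P [set w | Y w = 1] = p%:E ->
  P [set w | Y w = -1] = (1 - p)%:E ->
  (* W has the stationary law: W =_D (Y W + X)^+ with X, Y, W independent *)
  indep3 P X Y W ->
  (forall A : set R, measurable A ->
     P (W @^-1` A) = P ((fun w => Num.max (Y w * W w + X w) 0) @^-1` A)) ->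
  (* Cramer-type condition *)
  0 < kappa ->
  (\int[P]_w (expR (kappa * X w))%:E = (p^-1)%:E)%E ->
  P.-integrable setT (fun w => (X w * expR (kappa * X w))%:E) ->
  (* B Bernoulli(p), and B, X, R = e^W mutually independent *)
  P [set w | B w = 1] = p%:E ->
  P [set w | B w = 0] = (1 - p)%:E ->
  indep3 P B X W ->
  let m := fine (\int[P]_w (X w * expR (kappa * X w))%:E) in
  let Rv := fun w => expR (W w) in
  let M := fun w => B w * expR (X w) in
  let C := ((m^-1)%:E *
     \int[lebesgue_measure]_(t in `]0%R, +oo[%classic)
        ((P [set w | (t < Rv w)%R] - P [set w | (t < M w * Rv w)%R]) *
         (t `^ (kappa - 1))%R%:E))%E in
  C = ((((1 - p) / (m * kappa))%:E) +
       ((1 - p) / m)%:E *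
         \int[lebesgue_measure]_(s in `[0%R, +oo[%classic)
            (P [set w | (s < X w - W w)%R] * (expR (kappa * s))%:E) +
       (p / m)%:E *
         \int[lebesgue_measure]_(s in `]-oo, 0%R]%classic)
            ((expR (kappa * s))%:E * P [set w | (X w + W w <= s)%R]))%E.
Proof.
move=> _ _ /andP[p0 p1] Y1 Ym1 XYW W_stationary k0 _ _ B1 B0 BXW m Rv M C.
have [[[mX mY] mW] mB] := (measurable_funPT X, measurable_funPT Y, measurable_funPT W,
  measurable_funPT B).
set F1 := fun s => fine (P [set w | X w + W w <= s]).
set F2 := fun s => fine (P [set w | s < X w - W w]).
have mF1 : measurable_fun setT F1 by apply: measurable_fine_probability_le; exact: measurable_funD.
have mF2 : measurable_fun setT F2 by apply: measurable_fine_probability_gt; exact: measurable_funB.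
have F10 s : 0 <= F1 s by apply/fine_ge0/measure_ge0.
have F20 s : 0 <= F2 s by apply/fine_ge0/measure_ge0.
have p01 : 0 <= p <= 1 by rewrite !ltW.
rewrite /C /M /Rv.
under eq_integral => t.
  rewrite inE /= in_itv /= andbT => t0.
  rewrite (tail_difference mX mY mW mB Y1 Ym1 XYW W_stationary B1 B0 BXW t0).
  over.
rewrite (@ge0_integral_itv0y_powR _ kappa (fun s => (tail_gap p F1 F2 s)%:E)); first last.
- by move=> s; rewrite lee_fin; exact: tail_gap_ge0.
- by apply/measurable_EFinP; exact: measurable_tail_gap.
rewrite integral_tail_gap_expR //.
have -> : (\int[lebesgue_measure]_(s in `[0%R, +oo[) ((F2 s)%:E * (expR (kappa * s))%:E) =
    \int[lebesgue_measure]_(s in `[0%R, +oo[)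
      (P [set w | (s < X w - W w)%R] * (expR (kappa * s))%:E))%E.
  apply: eq_integral => s _; rewrite -probability_fine //.
  by apply: measurable_set_gt; exact: measurable_funB.
have -> : (\int[lebesgue_measure]_(s in `]-oo, 0%R]) ((expR (kappa * s))%:E * (F1 s)%:E) =
    \int[lebesgue_measure]_(s in `]-oo, 0%R])
      ((expR (kappa * s))%:E * P [set w | (X w + W w <= s)%R]))%E.
  apply: eq_integral => s _; rewrite -probability_fine //.
  by apply: measurable_set_le; exact: measurable_funD.
set I2 := (\int[lebesgue_measure]_(s in `[0%R, +oo[) _)%E.
set I1 := (\int[lebesgue_measure]_(s in `]-oo, 0%R]) _)%E.
have I20 : (0 <= I2)%E.
  by apply: integral_ge0 => s _; rewrite mule_ge0 ?lee_fin ?expR_ge0.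
have I10 : (0 <= I1)%E.
  by apply: integral_ge0 => s _; rewrite mule_ge0 ?lee_fin ?expR_ge0.
have q0 : 0 <= 1 - p by rewrite subr_ge0 ltW.
clearbody I1 I2.
rewrite ge0_muleDr ?ge0_muleDr ?adde_ge0 ?mule_ge0 ?lee_fin ?divr_ge0 ?(ltW k0) ?(ltW p0) //.
rewrite !muleA -!EFinM; congr (_%:E + _%:E * _ + _%:E * _)%E.
- by rewrite invfM; ring.
- by rewrite mulrC.
- by rewrite mulrC.
Qed.
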